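(* Let $m\ge 2$ and $1\le\ell<m$. For the Borda rule (scoring function $\alpha_i=m-i$), the optimal truncated-ballot algorithm applied to $\ell$-truncated elections is an approximation algorithm with approximation ratio $\frac{\ell}{m+\frac{\ell}{m-1}\cdot\ell}$: for every election $E$, the returned candidate $w$ satisfies $\mathrm{sc}_\lambda(w)\ge\frac{\ell}{m+\ell^2/(m-1)}\max_{c\in C}\mathrm{sc}_\lambda(c)$.
   Context: An election consists of a set $V$ of $n$ voters and a set $C$ of $m$ candidates; each voter $v$ has a strict linear order over $C$, and $\mathrm{pos}_v(c)$ is the position of $c$ (1 = top). For scoring function $\lambda(i)=\alpha_i$, $\mathrm{sc}_\lambda(c)=\sum_{v}\lambda(\mathrm{pos}_v(c))$. The $\ell$-truncation reveals for each voter only her top $\ell$ candidates in order. Let $\mathrm{occ}(c)$ be the number of voters ranking $c$ among their top $\ell$ and $T(c)=\sum_{v:\,\mathrm{pos}_v(c)\le\ell}\alpha_{\mathrm{pos}_v(c)}$; $\mathrm{worst}(c)=T(c)+(n-\mathrm{occ}(c))\alpha_m$, $\mathrm{best}(c)=T(c)+(n-\mathrm{occ}(c))\alpha_{\ell+1}$. Optimal truncated-ballot algorithm: let $a$ maximize $\mathrm{worst}$, $b_1$ maximize $\mathrm{best}$, and $b_2$ maximize $\mathrm{best}$ over $C\setminus\{b_1\}$; return $a$ if $\mathrm{worst}(a)/\mathrm{best}(b_1)\ge\mathrm{worst}(b_1)/\mathrm{best}(b_2)$, else $b_1$. *)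

From HB Require Import structures.
From mathcomp Require Import all_boot all_order all_algebra all_fingroup.
Set Implicit Arguments. Unset Strict Implicit. Unset Printing Implicit Defensive.
Import Order.TTheory GRing.Theory Num.Theory.

(* Voter v's strict linear order is the permutation [E v] : {perm 'I_m};
   [E v c] is the 0-based rank of c, so pos_v(c) = (E v c).+1 (1 = top). *)
Definition election (n m : nat) := 'I_n -> {perm 'I_m}.

Definition pos n m (E : election n m) (v : 'I_n) (c : 'I_m) : nat := (E v c).+1.

(* scoring function lambda(i) = alpha_i, positions are 1-based *)
Definition score n m (lam : nat -> nat) (E : election n m) (c : 'I_m) : nat :=
  \sum_(v < n) lam (pos E v c).

Definition borda (m : nat) : nat -> nat := fun i => m - i.

(* Quantities computable from the l-truncation *)
Definition occ n m (l : nat) (E : election n m) (c : 'I_m) : nat :=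
  #|[set v : 'I_n | pos E v c <= l]|.

Definition Ttop n m (lam : nat -> nat) (l : nat) (E : election n m) (c : 'I_m) : nat :=
  \sum_(v < n | pos E v c <= l) lam (pos E v c).

Definition worst n m (lam : nat -> nat) (l : nat) (E : election n m) (c : 'I_m) : nat :=
  Ttop lam l E c + (n - occ l E c) * lam m.

Definition best n m (lam : nat -> nat) (l : nat) (E : election n m) (c : 'I_m) : nat :=
  Ttop lam l E c + (n - occ l E c) * lam l.+1.

(* [w] is a possible output of the optimal truncated-ballot algorithm
   (for any admissible choice of the maximizers a, b1, b2). *)
Definition trunc_alg_output n m (lam : nat -> nat) (l : nat) (E : election n m)
    (w : 'I_m) : Prop :=
  exists a b1 b2 : 'I_m,
    [/\ forall c, worst lam l E c <= worst lam l E a,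
        forall c, best lam l E c <= best lam l E b1,
        b2 != b1,
        forall c, c != b1 -> best lam l E c <= best lam l E b2 &
        w = if ((worst lam l E b1)%:R / (best lam l E b2)%:R
                  <= (worst lam l E a)%:R / (best lam l E b1)%:R :> rat)%R
            then a else b1].

From HB Require Import structures.
From mathcomp Require Import all_boot all_order all_algebra all_fingroup.
From mathcomp Require Import zify ring.
Import Order.TTheory GRing.Theory Num.Theory.

(* For any nonincreasing scoring function, the quantities read off an
   l-truncation sandwich the true score: worst c <= score c <= best c.  From
   this alone the algorithm's output achieves any ratio rho in [0, 1] with
   rho * max best <= max worst ([trunc_alg_approx]): if it returns a, its
   score dominates worst a >= rho * best b1 >= rho * OPT; if it returns b1
   and the optimum is some c != b1, then OPT <= best b2, and the failed
   comparison worst a / best b1 < worst b1 / best b2 gives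
   worst b1 >= rho * best b2.

   For Borda, worst c is just the truncated total T(c); summing over all
   candidates, sum_c T(c) >= n l (m - l), so max worst >= n l (m - l) / m.
   Combined with T(c) <= min(max worst, occ(c) (m - 1)) this yields
   l (m - 1) * max best <= (m (m - 1) + l^2) * max worst
   ([borda_best_bound]), i.e. rho = l / (m + l^2 / (m - 1)) works. *)

Lemma bigmax_attained (I : finType) (f : I -> nat) (a : I) :
  (forall c, f c <= f a) -> \max_c f c = f a.
Proof. by move=> f_le; apply/eqP; rewrite eqn_leq leq_bigmax andbT; apply/bigmax_leqP. Qed.
Arguments bigmax_attained {I f a}.

Section TruncatedScores.
Variables (n m : nat) (lam : nat -> nat) (l : nat) (E : election n m).
Hypothesis lam_noninc : forall i j, i <= j -> lam j <= lam i.

Lemma score_split c : score lam E c =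
  Ttop lam l E c + \sum_(v | ~~ (pos E v c <= l)) lam (pos E v c).
Proof. by rewrite /score (bigID (fun v => pos E v c <= l)). Qed.

Lemma card_untruncated c : #|[pred v | ~~ (pos E v c <= l)]| = n - occ l E c.
Proof.
have := cardC [set v | pos E v c <= l]; rewrite card_ord /occ => card_split.
apply: (canRL (addKn _)); rewrite -[in RHS]card_split; congr (_ + _).
by apply: eq_card => v; rewrite !inE.
Qed.

(* Hidden positions are at most m, so each contributes at least lam m. *)
Lemma worst_le_score c : worst lam l E c <= score lam E c.
Proof.
rewrite score_split /worst leq_add2l -card_untruncated -sum_nat_const.
by apply: leq_sum => v _; apply: lam_noninc; rewrite /pos ltn_ord.
Qed.

(* Hidden positions are at least l + 1, so each contributes at most lam (l + 1). *)
Lemma score_le_best c : score lam E c <= best lam l E c.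
Proof.
rewrite score_split /best leq_add2l -card_untruncated -sum_nat_const.
by apply: leq_sum => v; rewrite -ltnNge => /lam_noninc.
Qed.

Lemma occ_le c : occ l E c <= n.
Proof. by rewrite /occ -[n in _ <= n]card_ord max_card. Qed.

(* Every voter distributes exactly lam 1, ..., lam l over the candidates. *)
Lemma sum_Ttop : l <= m ->
  \sum_(c < m) Ttop lam l E c = n * \sum_(i < l) lam i.+1.
Proof.
move=> le_lm; rewrite /Ttop; under eq_bigr do rewrite big_mkcond.
rewrite exchange_big /= -[n in RHS]card_ord -sum_nat_const.
apply: eq_bigr => v _; rewrite -big_mkcond /=.
rewrite (big_ord_widen_cond _ xpredT (fun i => lam i.+1) le_lm).
by rewrite [RHS](reindex_perm (E v)).
Qed.

Local Notation worst := (worst lam l E).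
Local Notation best := (best lam l E).
Local Notation score := (score lam E).

Lemma trunc_alg_approx (rho : rat) w :
  (0 <= rho <= 1)%R ->
  (rho * (\max_c best c)%:R <= (\max_c worst c)%:R)%R ->
  trunc_alg_output lam l E w ->
  (rho * (\max_c score c)%:R <= (score w)%:R)%R.
Proof.
move=> /andP[rho_ge0 rho_le1] guarantee [a [b1 [b2 [Ha Hb1 b2_neq Hb2 ->]]]].
rewrite (bigmax_attained Ha) (bigmax_attained Hb1) in guarantee.
have [opt ->] : {opt | \max_c score c = score opt}.
  by apply: bigop.eq_bigmax; rewrite card_ord (leq_ltn_trans _ (ltn_ord a)).
have opt_le_b1 : score opt <= best b1.
  exact: leq_trans (score_le_best opt) (Hb1 opt).
case: ifP => choose_a.
  have opt_scaled : (rho * (score opt)%:R <= rho * (best b1)%:R)%R.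
    by rewrite ler_wpM2l // ler_nat.
  by rewrite (le_trans opt_scaled (le_trans guarantee _)) // ler_nat worst_le_score.
have [-> | opt_neq] := eqVneq opt b1.
  by rewrite ler_piMl ?ler0n.
have opt_le_b2 : score opt <= best b2 by rewrite (leq_trans (score_le_best opt)) ?Hb2.
suff b1_good : (rho * (best b2)%:R <= (worst b1)%:R)%R.
  have opt_scaled : (rho * (score opt)%:R <= rho * (best b2)%:R)%R.
    by rewrite ler_wpM2l // ler_nat.
  by rewrite (le_trans opt_scaled (le_trans b1_good _)) // ler_nat worst_le_score.
have [b2_zero | b2_pos] := posnP (best b2).
  by rewrite b2_zero mulr0 ler0n.
have b1_pos : 0 < best b1 := leq_trans b2_pos (Hb1 b2).
have rho_le_ratio_a : (rho <= (worst a)%:R / (best b1)%:R)%R.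
  by rewrite ler_pdivlMr ?ltr0n.
rewrite -ler_pdivlMr ?ltr0n // (le_trans rho_le_ratio_a) // ltW //.
by rewrite ltNge choose_a.
Qed.
End TruncatedScores.

(* The arithmetic core of the Borda bound: with T = T(b), x = occ(b),
   y = n - occ(b) and W = max worst, best b = T + y (m - l - 1). *)
Lemma borda_ratio_arith m l x y T W : l < m ->
  T <= W -> T <= x * (m - 1) -> (x + y) * (l * (m - l)) <= m * W ->
  l * (m - 1) * (T + y * (m - l.+1)) <= (m * (m - 1) + l * l) * W.
Proof.
move=> lt_lm; have [j ->] : exists j, m = (l + j).+1 by exists (m - l).-1; lia.
have e1 : (l + j).+1 - 1 = l + j by lia.
have e2 : (l + j).+1 - l.+1 = j by lia.
have e3 : (l + j).+1 - l = j.+1 by lia.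
rewrite e1 e2 e3.
move=> T_le_W T_le_x avg.
(* T <= x (l + j) absorbs the j T term; then l (x + y) j is paid by avg. *)
have step1 : (l + j) * (T + y * j) <= T * l + (x + y) * (l + j) * j by nia.
have step2 : l * (x + y) * (l + j) * j <= (l + j) * W * (l + j).+1 by nia.
nia.
Qed.

Section Borda.
Variables (n m l : nat) (E : election n m).

Lemma borda_noninc i j : i <= j -> borda m j <= borda m i.
Proof. exact: leq_sub2l. Qed.

(* For Borda, hidden positions may score 0, so worst c is the visible total. *)
Lemma borda_worst c : worst (borda m) l E c = Ttop (borda m) l E c.
Proof. by rewrite /worst /borda subnn muln0 addn0. Qed.

(* Each visible Borda contribution is at most m - 1. *)
Lemma borda_Ttop_le c : Ttop (borda m) l E c <= occ l E c * (m - 1).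
Proof.
rewrite /Ttop /occ (eq_card (B := [pred v | pos E v c <= l])) => [|v]; last by rewrite inE.
by rewrite -sum_nat_const; apply: leq_sum => v _; apply: borda_noninc.
Qed.

Lemma borda_top_sum : l <= m -> l * (m - l) <= \sum_(i < l) borda m i.+1.
Proof.
move=> le_lm; rewrite -[l in l * _]card_ord -sum_nat_const.
by apply: leq_sum => i _; apply: borda_noninc; rewrite ltn_ord.
Qed.

Lemma borda_best_bound : l < m ->
  l * (m - 1) * \max_(c < m) best (borda m) l E c <=
    (m * (m - 1) + l * l) * \max_(c < m) worst (borda m) l E c.
Proof.
move=> lt_lm.
have [c ->] : {c | \max_(c < m) best (borda m) l E c = best (borda m) l E c}.
  by apply: bigop.eq_bigmax; rewrite card_ord (leq_ltn_trans _ lt_lm).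
set W := \max_(d < m) _.
(* Averaging: the maximal worst value is at least the mean visible total. *)
have avg : n * (l * (m - l)) <= m * W.
  rewrite (leq_trans (leq_mul (leqnn n) (borda_top_sum (ltnW lt_lm)))) //.
  rewrite -(@sum_Ttop n m (borda m) l E (ltnW lt_lm)).
  rewrite -[m in m * W]card_ord -sum_nat_const.
  by apply: leq_sum => d _; rewrite -borda_worst (leq_bigmax d).
move: avg; rewrite -{1}(subnKC (occ_le _ _ l E c)) => avg.
apply: borda_ratio_arith lt_lm _ (borda_Ttop_le c) avg.
by rewrite -borda_worst (leq_bigmax c).
Qed.
End Borda.

Theorem corollary6 (m l n : nat) (Hm : 2 <= m) (Hl1 : 1 <= l) (Hlm : l < m)
    (E : election n m) (w : 'I_m) :
  trunc_alg_output (borda m) l E w ->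
  ((l%:R / (m%:R + l%:R / (m.-1)%:R * l%:R)) * (\max_(c : 'I_m) score (borda m) E c)%:R
     <= (score (borda m) E w)%:R :> rat)%R.
Proof.
move=> output.
set D := m * (m - 1) + l * l.
have D_pos : (0 < D%:R :> rat)%R by rewrite ltr0n /D; nia.
have rho_eq : (l%:R / (m%:R + l%:R / (m.-1)%:R * l%:R) = (l * (m - 1))%:R / D%:R :> rat)%R.
  have m1_neq0 : ((m.-1)%:R != 0 :> rat)%R by rewrite pnatr_eq0; lia.
  move: D_pos; rewrite /D subn1 natrD !natrM => D_pos.
  by field; rewrite m1_neq0 gt_eqF.
rewrite rho_eq; apply: trunc_alg_approx output => [i j||].
- exact: borda_noninc.
- rewrite divr_ge0 ?ler0n //= ler_pdivrMr // mul1r ler_nat /D; nia.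
- rewrite mulrAC ler_pdivrMr // -!natrM ler_nat [X in _ <= X]mulnC.
  exact: borda_best_bound.
Qed.
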